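(* Let $L=E[C_1,\dots,C_n]$ be a congruence uniform lattice that is extremal. Then every element of the spine of $L$ is left modular.
   Context: All lattices are finite. For a convex subset $C$ of a lattice $L$ (convex: $x,y\in C\Rightarrow[x,y]\subseteq C$), let $I_L(C)=\{y\in L\mid\exists x\in C,\ y\le x\}$, and let the doubling $L[C]$ be the subposet of $L\times\{0<1\}$ on $\big(I_L(C)\times\{0\}\big)\sqcup\big(((L\setminus I_L(C))\cup C)\times\{1\}\big)$. $E[\,]$ is the one-element lattice and $E[C_1,\dots,C_{i+1}]:=E[C_1,\dots,C_i][C_{i+1}]$ with $C_{i+1}$ a nonempty convex subset of $E[C_1,\dots,C_i]$; if every $C_i$ is an interval, the lattice is congruence uniform. The length of a poset is the maximum number of elements of a chain minus one; the spine is the set of elements lying on some chain of maximum length. $L$ is extremal if its length equals both the number of join-irreducible elements (covering exactly one element) and the number of meet-irreducible elements (covered by exactly one element). An element $a$ is left modular if for all $b<c$, $(b\vee a)\wedge c=b\vee(a\wedge c)$. *)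

From mathcomp Require Import all_boot.
Set Implicit Arguments. Unset Strict Implicit. Unset Printing Implicit Defensive.

Section FinPoset.
Variables (T : finType) (le : rel T).

Definition plt (x y : T) : bool := le x y && (x != y).

Definition covers (x y : T) : bool :=
  plt y x && [forall z, ~~ (plt y z && plt z x)].

Definition join_irr (x : T) : bool := #|[set y | covers x y]| == 1.
Definition meet_irr (x : T) : bool := #|[set y | covers y x]| == 1.

Definition is_chain (S : {set T}) : bool :=
  [forall x in S, forall y in S, le x y || le y x].

Definition poset_length : nat := (\max_(S : {set T} | is_chain S) #|S|).-1.

Definition spine : {set T} :=
  [set x | [exists S : {set T}, [&& is_chain S, #|S|.-1 == poset_length & x \in S]]].

Definition extremal : Prop :=
  poset_length = #|[set x | join_irr x]| /\ poset_length = #|[set x | meet_irr x]|.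

Definition is_join (x y z : T) : Prop :=
  le x z /\ le y z /\ forall w, le x w -> le y w -> le z w.
Definition is_meet (x y z : T) : Prop :=
  le z x /\ le z y /\ forall w, le w x -> le w y -> le w z.

Definition left_modular (a : T) : Prop :=
  forall b c, plt b c ->
  forall j u m v, is_join b a j -> is_meet j c u ->
                  is_meet a c m -> is_join b m v -> u = v.

Definition interval (a b : T) : {set T} := [set x | le a x && le x b].

Definition down_set (C : {set T}) : {set T} :=
  [set y | [exists x in C, le y x]].

(* carrier of the doubling L[C], as a subset of L x {0<1} (false < true) *)
Definition doubling_set (C : {set T}) : {set T * bool} :=
  [set p | if p.2 then (p.1 \notin down_set C) || (p.1 \in C)
           else p.1 \in down_set C].

Definition prod_le (p q : T * bool) : bool := le p.1 q.1 && (p.2 ==> q.2).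

End FinPoset.

(* Lattices E[C_1,...,C_n] with every C_i a (nonempty) interval, up to
   isomorphism: the one-element lattice, and the doubling of such a lattice
   at an interval [a,b] with a <= b. A poset (T',le') is (isomorphic to)
   L[C] when an injective f : T' -> T * bool has image exactly the doubling
   set and reflects/preserves the order. *)
Inductive interval_doubling : forall T : finType, rel T -> Prop :=
| id_one (T : finType) (le : rel T) :
    #|T| = 1 -> (forall x, le x x) -> interval_doubling le
| id_double (T : finType) (le : rel T) (a b : T)
            (T' : finType) (le' : rel T') (f : T' -> T * bool) :
    interval_doubling le -> le a b ->
    injective f ->
    (forall p, p \in doubling_set le (interval le a b) <-> exists x, f x = p) ->
    (forall x y, le' x y = prod_le le (f x) (f y)) ->
    interval_doubling le'.

From mathcomp Require Import all_boot.
From mathcomp Require Import zify.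

Set Implicit Arguments. Unset Strict Implicit. Unset Printing Implicit Defensive.

(* Write L' = L[a, b] and view its elements as points of L tagged with a copy
   (0 or 1).  The projection L' -> L has a lower and an upper adjoint, so it maps
   joins and meets of L' to joins and meets of L.  A chain of L' projects onto a
   chain of L with at most one point hit twice, so doubling raises the length by at
   most one, while every join-irreducible of L lifts to one of L' and (a, 1) is a
   new one.  Hence length <= #J for every E[C_1, ..., C_n] with intervals C_i, and
   equality forces each doubling to raise the length.  Then a maximum chain of L'
   projects onto a maximum chain of L whose doubled point lies above a, so a spine
   element p of L' projects into the spine of L, and above a if p is in copy 1.
   Given q < r, the elements u = (q \/ p) /\ r >= v = q \/ (p /\ r) have equal
   projections by induction; were they in different copies, p /\ r would be in
   copy 1 when p is (contradicting p /\ r <= v), and q \/ p in copy 0 when p is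
   (contradicting u <= q \/ p). *)

Definition partial_order (T : finType) (le : rel T) : Prop :=
  [/\ reflexive le, transitive le & antisymmetric le].

Section PosetLength.
Variables (T : finType) (le : rel T).

Lemma chain_card_le (S : {set T}) : is_chain le S -> #|S| <= (poset_length le).+1.
Proof.
by move=> S_chain; apply: leq_trans (leqSpred _); exact: leq_bigmax_cond.
Qed.

Lemma poset_length_le n :
  (forall S : {set T}, is_chain le S -> #|S| <= n.+1) -> poset_length le <= n.
Proof. by move=> bound; rewrite /poset_length -subn1 leq_subLR add1n; apply/bigmax_leqP. Qed.
End PosetLength.

Section Poset.
Variables (T : finType) (le : rel T).
Hypotheses (le_refl : reflexive le) (le_trans : transitive le) (le_anti : antisymmetric le).

Lemma exists_lower_cover_above z x : plt le z x -> exists2 w, le z w & covers le x w.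
Proof.
move=> z_lt_x; pose P w := le z w && plt le w x.
have Pz : P z by rewrite /P le_refl.
have [w /andP[z_le_w w_lt_x] w_max] := arg_maxnP (fun w => #|[set v | le v w]|) Pz.
exists w => //; rewrite /covers w_lt_x; apply/forallP => v.
apply/negP => /andP[/andP[w_le_v w_ne_v] v_lt_x].
have /w_max : P v by rewrite /P v_lt_x (le_trans z_le_w w_le_v).
apply/negP; rewrite -ltnNge; apply: proper_card; apply/properP; split.
  by apply/subsetP => t; rewrite !inE => /le_trans; apply.
exists v; rewrite !inE ?le_refl //; apply: contra w_ne_v => v_le_w.
by apply/eqP/le_anti; rewrite w_le_v.
Qed.

Lemma join_irrP x :
  reflect (exists y, plt le y x /\ forall z, plt le z x -> le z y) (join_irr le x).
Proof.
apply: (iffP cards1P) => [[y covers_y] | [y [y_lt_x y_max]]].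
  have x_covers_y : covers le x y by have := set11 y; rewrite -covers_y inE.
  exists y; split; first by case/andP: x_covers_y.
  move=> z /exists_lower_cover_above [w z_le_w].
  by move/setP/(_ w): covers_y; rewrite !inE => -> /eqP <-.
exists y; apply/setP => z; rewrite !inE; apply/idP/eqP => [/andP[z_lt_x] | ->].
  by move=> /forallP/(_ y); rewrite y_lt_x /plt y_max //= andbT negbK => /eqP.
rewrite /covers y_lt_x; apply/forallP => w; apply/negP => /andP[/andP[y_le_w y_ne_w]].
move/y_max => w_le_y; apply: (negP y_ne_w).
by apply/eqP/le_anti; rewrite y_le_w.
Qed.

Lemma modular_inequality q p r J u m v : le q r ->
  is_join le q p J -> is_meet le J r u -> is_meet le p r m -> is_join le q m v ->
  le v u.
Proof.
move=> q_le_r [q_le_J [p_le_J _]] [_ [_ u_glb]] [m_le_p [m_le_r _]] [_ [_ v_lub]].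
by apply: v_lub; apply: u_glb => //; apply: le_trans p_le_J.
Qed.
End Poset.

Definition in_doubling (T : finType) (le : rel T) (a b : T) (p : T * bool) : bool :=
  if p.2 then ~~ le p.1 b || le a p.1 else le p.1 b.

Lemma doubling_set_interval (T : finType) (le : rel T) (a b : T) :
  partial_order le -> le a b ->
  forall p, (p \in doubling_set le (interval le a b)) = in_doubling le a b p.
Proof.
move=> [le_refl le_trans _] le_ab [x k].
have down_b : (x \in down_set le (interval le a b)) = le x b.
  rewrite inE; apply/existsP/idP => [[y /andP[]] | x_le_b].
    by rewrite inE => /andP[_ y_le_b] /le_trans; apply.
  by exists b; rewrite !inE le_ab le_refl.
rewrite inE /in_doubling /= down_b inE.
by case: k; case: (le x b); rewrite ?andbT ?andbF ?orbF.
Qed.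

Definition doubling_of (T T' : finType) (le : rel T) (a b : T) (le' : rel T')
    (f : T' -> T * bool) : Prop :=
  [/\ le a b, injective f, forall p, in_doubling le a b p <-> exists t, f t = p
    & forall x y, le' x y = prod_le le (f x) (f y)].

Section Doubling.
Variables (T T' : finType) (le : rel T) (a b : T) (le' : rel T') (f : T' -> T * bool).
Hypotheses (le_po : partial_order le) (dbl : doubling_of le a b le' f).

Let le_refl : reflexive le. Proof. by case: le_po. Qed.
Let le_trans : transitive le. Proof. by case: le_po. Qed.
Let le_anti : antisymmetric le. Proof. by case: le_po. Qed.
Let le_ab : le a b. Proof. by case: dbl. Qed.
Let f_inj : injective f. Proof. by case: dbl. Qed.
Let f_onto p : in_doubling le a b p -> exists t, f t = p. Proof. by case: dbl => _ _ ->. Qed.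
Let le'E x y : le' x y = prod_le le (f x) (f y). Proof. by case: dbl. Qed.

Lemma in_doubling_f t : in_doubling le a b (f t).
Proof. by case: dbl => _ _ ->; exists t. Qed.

Lemma le_proj x y : le' x y -> le (f x).1 (f y).1.
Proof. by rewrite le'E => /andP[]. Qed.

Lemma doubling_partial_order : partial_order le'.
Proof.
split=> [x | y x z | x y]; rewrite ?le'E /prod_le.
- by rewrite le_refl implybb.
- move=> /andP[xy kxy] /andP[yz kyz]; rewrite (le_trans xy yz).
  by move: kxy kyz; do 2 case: (f _).2.
- move=> /andP[/andP[xy kxy] /andP[yx kyx]]; apply: f_inj.
  case: (f x) (f y) xy kxy yx kyx => [x1 x2] [y1 y2] /= xy kxy yx kyx.
  by rewrite (@le_anti x1 y1) ?xy //; move: kxy kyx; case: x2; case: y2.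
Qed.

Lemma lift_exists p : in_doubling le a b p -> exists t, f t == p.
Proof. by move/f_onto => [t <-]; exists t. Qed.

Lemma in_doubling_lo x : in_doubling le a b (x, ~~ le x b).
Proof. by rewrite /in_doubling /=; case: (le x b). Qed.

Lemma in_doubling_hi x : in_doubling le a b (x, ~~ le x b || le a x).
Proof. by rewrite /in_doubling /=; case: (le x b); case: (le a x). Qed.

(* The lower and upper adjoints of the projection [fun t => (f t).1]. *)
Definition lift_lo x : T' := xchoose (lift_exists (in_doubling_lo x)).
Definition lift_hi x : T' := xchoose (lift_exists (in_doubling_hi x)).

Lemma f_lift_lo x : f (lift_lo x) = (x, ~~ le x b).
Proof. exact/eqP/(xchooseP (lift_exists (in_doubling_lo x))). Qed.

Lemma f_lift_hi x : f (lift_hi x) = (x, ~~ le x b || le a x).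
Proof. exact/eqP/(xchooseP (lift_exists (in_doubling_hi x))). Qed.

Lemma lift_lo_le x z : le' (lift_lo x) z = le x (f z).1.
Proof.
rewrite le'E f_lift_lo /prod_le /=; have := in_doubling_f z.
case: (f z) => y [] /= y_dbl; first by rewrite implybT andbT.
by case x_le_y: (le x y); rewrite //= (le_trans x_le_y y_dbl).
Qed.

Lemma le_lift_hi x z : le' z (lift_hi x) = le (f z).1 x.
Proof.
rewrite le'E f_lift_hi /prod_le /=; have := in_doubling_f z.
case: (f z) => y [] /= y_dbl; last by rewrite andbT.
case y_le_x: (le y x); rewrite //=; case x_le_b: (le x b) => //=.
by move: y_dbl; rewrite /in_doubling /= (le_trans y_le_x x_le_b) => /le_trans; apply.
Qed.

Lemma is_join_proj s t J :
  is_join le' s t J -> is_join le (f s).1 (f t).1 (f J).1.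
Proof.
move=> [s_le_J [t_le_J J_lub]]; do !split; rewrite ?le_proj //.
by move=> w s_le_w t_le_w; rewrite -le_lift_hi J_lub ?le_lift_hi.
Qed.

Lemma is_meet_proj s t M :
  is_meet le' s t M -> is_meet le (f s).1 (f t).1 (f M).1.
Proof.
move=> [M_le_s [M_le_t M_glb]]; do !split; rewrite ?le_proj //.
by move=> w w_le_s w_le_t; rewrite -lift_lo_le M_glb ?lift_lo_le.
Qed.

Lemma le_lift_lo x z : le x b -> le' z (lift_lo x) = le (f z).1 x && ~~ (f z).2.
Proof. by move=> x_le_b; rewrite le'E f_lift_lo x_le_b /prod_le implybF. Qed.

Lemma lift_hi_le x z : le a x -> le' (lift_hi x) z = le x (f z).1 && (f z).2.
Proof. by move=> a_le_x; rewrite le'E f_lift_hi a_le_x orbT /prod_le. Qed.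

Lemma join_in_lower_copy s t J : is_join le' s t J -> ~~ (f s).2 -> ~~ (f t).2 -> ~~ (f J).2.
Proof.
move=> sJ s_lo t_lo; have [_ [_ J_lub]] := is_join_proj sJ.
have lo_le_b u : ~~ (f u).2 -> le (f u).1 b.
  by have := in_doubling_f u; rewrite /in_doubling; case: (f u).2.
have J_le_b : le (f J).1 b by apply: J_lub; apply: lo_le_b.
have [s_le_J [t_le_J J_least]] := sJ.
have : le' J (lift_lo (f J).1) by apply: J_least; rewrite le_lift_lo ?le_proj.
by rewrite le_lift_lo // => /andP[].
Qed.

Lemma meet_in_upper_copy s t M :
  is_meet le' s t M -> (f s).2 -> (f t).2 -> le a (f M).1 -> (f M).2.
Proof.
move=> [M_le_s [M_le_t M_glb]] s_hi t_hi a_le_M.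
have : le' (lift_hi (f M).1) M by apply: M_glb; rewrite lift_hi_le // le_proj.
by rewrite lift_hi_le // => /andP[].
Qed.

Lemma le_bit x y : le' x y -> (f x).2 -> (f y).2.
Proof. by rewrite le'E => /andP[_ /implyP]. Qed.

Lemma left_modular_proj p q r J u m v :
  left_modular le (f p).1 -> le' q r ->
  is_join le' q p J -> is_meet le' J r u -> is_meet le' p r m -> is_join le' q m v ->
  (f u).1 = (f v).1.
Proof.
move=> lm_p q_le_r qpJ Jru prm qmv; have [_ le'_trans _] := doubling_partial_order.
have [qr_eq | qr_ne] := eqVneq (f q).1 (f r).1.
  have [[_ [u_le_r _]] [q_le_v _]] := (Jru, qmv).
  apply: le_anti; rewrite (le_proj (modular_inequality le'_trans q_le_r qpJ Jru prm qmv)) andbT.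
  by apply: le_trans (le_proj u_le_r) _; rewrite -qr_eq le_proj.
apply: (lm_p (f q).1 (f r).1) (is_join_proj qpJ) (is_meet_proj Jru) _ _.
- by rewrite /plt le_proj.
- exact: is_meet_proj prm.
- exact: is_join_proj qmv.
Qed.

Lemma left_modular_lift p :
  left_modular le (f p).1 -> ((f p).2 -> le a (f p).1) -> left_modular le' p.
Proof.
move=> lm_p p_hi_above_a q r /andP[q_le_r _] J u m v qpJ Jru prm qmv.
have [_ le'_trans _] := doubling_partial_order.
have v_le_u : le' v u := modular_inequality le'_trans q_le_r qpJ Jru prm qmv.
have proj_uv := left_modular_proj lm_p q_le_r qpJ Jru prm qmv.
apply: f_inj; rewrite [f u]surjective_pairing [f v]surjective_pairing proj_uv.
congr pair; apply/idP/idP => [u_hi | ]; last exact: le_bit.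
apply/negPn/negP => v_lo.
have [[_ [u_le_r _]] [_ [m_le_v _]]] := (Jru, qmv).
have a_le_v : le a (f v).1.
  have := in_doubling_f u; have := in_doubling_f v.
  by rewrite /in_doubling u_hi (negbTE v_lo) -proj_uv => ->.
have [p_hi | p_lo] := boolP (f p).2.
  have a_le_m : le a (f m).1.
    have [_ [_ m_glb]] := is_meet_proj prm; apply: m_glb; first exact: p_hi_above_a.
    by rewrite (le_trans a_le_v) // -proj_uv le_proj.
  have r_hi := le_bit u_le_r u_hi.
  by rewrite (le_bit m_le_v (meet_in_upper_copy prm p_hi r_hi a_le_m)) in v_lo.
have [[q_le_v _] [u_le_J _]] := (qmv, Jru).
have q_lo : ~~ (f q).2 := contra (le_bit q_le_v) v_lo.
by have := join_in_lower_copy qpJ q_lo p_lo; rewrite (le_bit u_le_J u_hi).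
Qed.

Lemma plt_of_proj_neq x y : le' x y -> (f x).1 != (f y).1 -> plt le' x y.
Proof. by move=> x_le_y; rewrite /plt x_le_y; apply: contra => /eqP ->. Qed.

Lemma join_irr_lift_lo j : join_irr le j -> join_irr le' (lift_lo j).
Proof.
have [le'_refl le'_trans le'_anti] := doubling_partial_order.
move/(join_irrP le_refl le_trans le_anti) => [j' [/andP[j'_le_j j'_ne_j] j'_max]].
apply/(join_irrP le'_refl le'_trans le'_anti).
have below_j z : plt le' z (lift_lo j) -> le (f z).1 j'.
  move=> /andP[z_le_j z_ne_j]; apply: j'_max; rewrite /plt.
  have := le_proj z_le_j; rewrite f_lift_lo /= => -> /=.
  apply: contra z_ne_j => /eqP z_j; apply/eqP/le'_anti.
  by rewrite z_le_j lift_lo_le z_j le_refl.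
have [j_le_b | j_nle_b] := boolP (le j b).
  exists (lift_lo j'); split.
    by apply: plt_of_proj_neq; rewrite ?lift_lo_le !f_lift_lo.
  move=> z z_lt_j; rewrite le_lift_lo ?(le_trans j'_le_j) // below_j //=.
  by case/andP: z_lt_j; rewrite le_lift_lo // => /andP[].
exists (lift_hi j'); split; last by move=> z /below_j; rewrite le_lift_hi.
by apply: plt_of_proj_neq; rewrite ?le'E /prod_le f_lift_hi f_lift_lo /= ?j'_le_j ?j_nle_b ?implybT.
Qed.

Lemma join_irr_lift_hi_a : join_irr le' (lift_hi a).
Proof.
have [le'_refl le'_trans le'_anti] := doubling_partial_order.
have f_hi_a : f (lift_hi a) = (a, true) by rewrite f_lift_hi le_refl orbT.
apply/(join_irrP le'_refl le'_trans le'_anti); exists (lift_lo a); split.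
  rewrite /plt lift_lo_le f_hi_a le_refl /=; apply: contraTneq isT => lo_hi.
  by move: (f_lift_lo a); rewrite lo_hi f_hi_a le_ab.
move=> z /andP[z_le_hi z_ne_hi]; rewrite le_lift_lo //.
move: z_le_hi; rewrite le_lift_hi => z_le_a; rewrite z_le_a /=.
apply: contra z_ne_hi => z_hi; apply/eqP/f_inj; rewrite f_hi_a.
have := in_doubling_f z; rewrite /in_doubling z_hi (le_trans z_le_a le_ab) /= => a_le_z.
by rewrite [f z]surjective_pairing z_hi (@le_anti (f z).1 a) ?z_le_a.
Qed.

Lemma card_join_irr_lt :
  #|[set x | join_irr le x]| < #|[set t | join_irr le' t]|.
Proof.
have lo_inj : injective lift_lo.
  by move=> x y /(congr1 (fun t => (f t).1)); rewrite !f_lift_lo.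
have hi_a_new : lift_hi a \notin lift_lo @: [set x | join_irr le x].
  apply/imsetP => -[j _ /(congr1 f)]; rewrite f_lift_hi f_lift_lo => -[<-].
  by rewrite le_refl le_ab.
rewrite -(card_imset _ lo_inj).
apply: (@leq_trans #|lift_hi a |: lift_lo @: [set x | join_irr le x]|).
  by rewrite cardsU1 hi_a_new.
apply/subset_leq_card/subsetP => _ /setU1P [-> | /imsetP [j j_irr ->]].
  by rewrite inE join_irr_lift_hi_a.
by rewrite inE in j_irr; rewrite inE join_irr_lift_lo.
Qed.

Definition layer (S' : {set T'}) (k : bool) : {set T} := [set x | (x, k) \in f @: S'].

Lemma mem_layer (S' : {set T'}) k x :
  reflect (exists2 s, s \in S' & f s = (x, k)) (x \in layer S' k).
Proof. by rewrite inE; apply: (iffP imsetP) => -[s s_in fs]; exists s; rewrite ?fs. Qed.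

Lemma card_layers (S' : {set T'}) : #|S'| = #|layer S' false| + #|layer S' true|.
Proof.
have card_layer k : #|layer S' k| = #|[set p in f @: S' | p.2 == k]|.
  rewrite -(@card_imset _ _ (pair^~ k)) => [|x y [] //].
  apply: eq_card => -[x k']; rewrite !inE.
  apply/imsetP/andP => [[y] | [xk' /eqP /= k'_k]]; first by rewrite inE => ? [-> ->].
  by exists x; rewrite ?inE -?k'_k.
rewrite -(card_imset S' f_inj) -(cardsID [set p : T * bool | p.2] (f @: S')).
rewrite !card_layer [RHS]addnC.
by congr (_ + _); apply: eq_card => -[x []]; rewrite !inE ?andbT ?andbF.
Qed.

Lemma a_le_doubled (S' : {set T'}) c : c \in layer S' false :&: layer S' true -> le a c.
Proof.
case/setIP => /mem_layer [s _ fs] /mem_layer [t _ ft].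
have := in_doubling_f s; have := in_doubling_f t; rewrite fs ft /in_doubling /=.
by case/orP => // /negP.
Qed.

Section Chain.
Variable S' : {set T'}.
Hypothesis S'_chain : is_chain le' S'.

Lemma chain_comparable s t : s \in S' -> t \in S' -> le' s t || le' t s.
Proof.
by move=> s_in t_in; move/forallP/(_ s): S'_chain; rewrite s_in => /forallP/(_ t); rewrite t_in.
Qed.

Lemma le_layers c d : c \in layer S' false -> d \in layer S' true -> le c d.
Proof.
move=> /mem_layer [s s_in fs] /mem_layer [t t_in ft].
by have := chain_comparable s_in t_in; rewrite !le'E /prod_le fs ft /= andbT andbF orbF.
Qed.

Lemma chain_layers : is_chain le (layer S' false :|: layer S' true).
Proof.
have lift_of z : z \in layer S' false :|: layer S' true ->
    exists k, exists2 s, s \in S' & f s = (z, k).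
  by rewrite inE => /orP [] /mem_layer; [exists false | exists true].
apply/forallP => x; apply/implyP => /lift_of [kx [s s_in fs]].
apply/forallP => y; apply/implyP => /lift_of [ky [t t_in ft]].
have := chain_comparable s_in t_in; rewrite !le'E /prod_le fs ft.
by case/orP => /andP[-> _]; rewrite ?orbT.
Qed.

Lemma card_doubled_le1 : #|layer S' false :&: layer S' true| <= 1.
Proof.
apply/card_le1_eqP => c d /setIP [c0 c1] /setIP [d0 d1].
by apply: le_anti; rewrite !le_layers.
Qed.
End Chain.

Lemma length_doubling : poset_length le' <= (poset_length le).+1.
Proof.
apply: poset_length_le => S' S'_chain; rewrite card_layers -cardsUI -addn1.
by apply: leq_add; [exact: chain_card_le (chain_layers S'_chain) | exact: card_doubled_le1].
Qed.

Lemma spine_doubling p : poset_length le' = (poset_length le).+1 -> p \in spine le' ->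
  (f p).1 \in spine le /\ ((f p).2 -> le a (f p).1).
Proof.
move=> len_eq; rewrite inE => /existsP [S' /and3P [S'_chain /eqP S'_len p_in]].
set U := layer S' false :|: layer S' true; set I := layer S' false :&: layer S' true.
have := card_layers S'; rewrite -cardsUI -/U -/I => card_S'.
have := chain_card_le (chain_layers S'_chain); have := card_doubled_le1 S'_chain.
rewrite -/U -/I => I_le1 U_le.
have U_len : #|U|.-1 = poset_length le by lia.
have /card_gt0P [c c_in] : 0 < #|I| by lia.
have p_layer : (f p).1 \in layer S' (f p).2.
  by apply/mem_layer; exists p; rewrite -?surjective_pairing.
split.
  rewrite inE; apply/existsP; exists U; apply/and3P; split.
  - exact: chain_layers.
  - by rewrite U_len.
  - by rewrite inE; case: (f p).2 p_layer => ->; rewrite ?orbT.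
move=> p_hi; apply: le_trans (a_le_doubled c_in) (le_layers S'_chain _ _).
  by case/setIP: c_in.
by rewrite -p_hi.
Qed.
End Doubling.

Lemma doubling_invariant (T : finType) (le : rel T) : interval_doubling le ->
  [/\ partial_order le, poset_length le <= #|[set x | join_irr le x]|
    & poset_length le = #|[set x | join_irr le x]| ->
      {in spine le, forall x, left_modular le x}].
Proof.
elim=> {T le} [T le T1 le_refl | T le a b T' le' f _ [le_po len_le spine_lm]].
  have [x0 all_x0] := fintype1 T1.
  split; first by split=> // [y x z | x y] _; rewrite !all_x0.
    have len0 : poset_length le <= 0 by apply: poset_length_le => S _; rewrite -T1 max_card.
    exact: leq_trans len0 _.
  by move=> _ x _ y z /andP[_]; rewrite !all_x0 eqxx.
move=> le_ab f_inj f_img le'E.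
have dbl : doubling_of le a b le' f.
  by split=> // p; rewrite -doubling_set_interval.
have := length_doubling le_po dbl; have := card_join_irr_lt le_po dbl.
move=> card_lt len_le'; split; first exact: doubling_partial_order le_po dbl.
  lia.
move=> len_eq x x_spine.
have len_eq' : poset_length le' = (poset_length le).+1 by lia.
have [x_proj x_hi] := spine_doubling le_po dbl len_eq' x_spine.
apply: left_modular_lift le_po dbl _ _ x_hi.
by apply: spine_lm x_proj; lia.
Qed.

Theorem lemma3p20 (T : finType) (le : rel T) :
  interval_doubling le -> extremal le ->
  forall x, x \in spine le -> left_modular le x.
Proof.
move=> L_doubling [len_join_irr _].
by have [_ _ /(_ len_join_irr)] := doubling_invariant L_doubling.
Qed.
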